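(* For $(\varphi,\xi,\theta)$ let $C_\theta=\cos\theta\,(|\uparrow\rangle\langle\uparrow|+|\downarrow\rangle\langle\downarrow|)+\sin\theta\,(|\uparrow\rangle\langle\downarrow|-|\downarrow\rangle\langle\uparrow|)$ and $\gamma_{\varphi,\xi}=\cos\varphi\,|\uparrow\rangle+\sin\varphi\,e^{i\xi}|\downarrow\rangle$. Let $$S=\{(\varphi,0,\theta):\theta\in(0,\pi/2),\ \varphi\in[\theta/2,\ \pi/4+\theta/2]\}\ \cup\ \{(\varphi,\pi,\theta):\theta\in(0,\pi/2),\ \varphi\in(\pi/4-\theta/2,\ (\pi-\theta)/2]\}.$$ Then: (i) for every coin setup $(C,\gamma)$ with $C$ a non-trivial coin there is $(\varphi,\xi,\theta)\in S$ with $(C,\gamma)\sim_l(C_\theta,\gamma_{\varphi,\xi})$; (ii) if $s,s'\in S$ give asymptotically distributionally equivalent setups $(C_\theta,\gamma_{\varphi,\xi})\sim_l(C_{\theta'},\gamma_{\varphi',\xi'})$, then $s=s'$. Thus $(\varphi,\xi,\theta)\mapsto(C_\theta,\gamma_{\varphi,\xi})$ is a bijection from $S$ onto the asymptotic distributional equivalence classes of coin setups with non-trivial coins.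
   Context: Let $\mathcal{H}=\ell^2(\mathbb{Z})\otimes\mathbb{C}^2$, with position basis $\{|j\rangle: j\in\mathbb{Z}\}$ and coin basis $\{|\uparrow\rangle,|\downarrow\rangle\}$. A (quantum) coin is any $C\in U(2)$, written $C=a|\uparrow\rangle\langle\uparrow|+b|\uparrow\rangle\langle\downarrow|+c|\downarrow\rangle\langle\uparrow|+d|\downarrow\rangle\langle\downarrow|$; it is trivial iff $abcd=0$ and non-trivial otherwise. The walk operator is $W(C)=T(\mathbb{1}\otimes C)$ with $T=\sum_{j}|j+1\rangle\langle j|\otimes|\uparrow\rangle\langle\uparrow|+\sum_{j}|j-1\rangle\langle j|\otimes|\downarrow\rangle\langle\downarrow|$. A coin setup is a pair $(C,\gamma)$, $C\in U(2)$, $\gamma=\alpha|\uparrow\rangle+\beta|\downarrow\rangle$ a unit vector; $p_{(C,\gamma)}(j,n)=\langle\psi_n|(|j\rangle\langle j|\otimes\mathbb{1})|\psi_n\rangle$ with $\psi_n=W(C)^n(|0\rangle\otimes\gamma)$. For a setup $\mathcal{C}$ let $X_n$ be a $\mathbb{Z}$-valued random variable with law $p_{\mathcal{C}}(\cdot,n)$. Known fact (Konno): if $C$ is non-trivial, $X_n/n$ converges in distribution to the law with density $f_{\mathcal{C}}(x)=\dfrac{\sqrt{1-|a|^2}\,(1-\lambda_{\mathcal{C}}x)}{\pi(1-x^2)\sqrt{|a|^2-x^2}}$ for $x\in(-|a|,|a|)$ and $0$ elsewhere, where $\lambda_{\mathcal{C}}=|\alpha|^2-|\beta|^2+\dfrac{a\alpha\overline{b\beta}+\overline{a\alpha}b\beta}{|a|^2}$.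 Two setups $\mathcal{C}_1,\mathcal{C}_2$ with non-trivial coins are asymptotically distributionally equivalent, $\mathcal{C}_1\sim_l\mathcal{C}_2$, iff $f_{\mathcal{C}_1}=f_{\mathcal{C}_2}$. *)

From mathcomp Require Import all_boot all_order all_algebra.
From mathcomp Require Import complex spectral.
From mathcomp Require Import reals trigo.
Import Order.TTheory GRing.Theory Num.Theory.

Set Implicit Arguments.
Unset Strict Implicit.
Unset Printing Implicit Defensive.

Local Open Scope ring_scope.

Section QWalk.
Variable R : realType.

Definition up : 'I_2 := ord0.
Definition dn : 'I_2 := ord_max.

Definition is_coin (C : 'M[R[i]]_2) : Prop := C \is unitarymx.

Definition coin_a (C : 'M[R[i]]_2) := C up up.
Definition coin_b (C : 'M[R[i]]_2) := C up dn.
Definition coin_c (C : 'M[R[i]]_2) := C dn up.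
Definition coin_d (C : 'M[R[i]]_2) := C dn dn.

Definition nontrivial_coin (C : 'M[R[i]]_2) : Prop :=
  coin_a C * coin_b C * coin_c C * coin_d C != 0.

Definition alpha (g : 'cV[R[i]]_2) := g up 0.
Definition beta (g : 'cV[R[i]]_2) := g dn 0.

Definition unit_state (g : 'cV[R[i]]_2) : Prop :=
  Normc.normc (alpha g) ^+ 2 + Normc.normc (beta g) ^+ 2 = 1.

Definition lambda (C : 'M[R[i]]_2) (g : 'cV[R[i]]_2) : R :=
  let a := coin_a C in let b := coin_b C in
  let al := alpha g in let be := beta g in
  Normc.normc al ^+ 2 - Normc.normc be ^+ 2
  + complex.Re (a * al * Num.conj (b * be) + Num.conj (a * al) * (b * be))
    / Normc.normc a ^+ 2.

(* Konno's limit density f_{(C,gamma)} *)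
Definition density (C : 'M[R[i]]_2) (g : 'cV[R[i]]_2) (x : R) : R :=
  let A := Normc.normc (coin_a C) in
  if (- A < x) && (x < A) then
    Num.sqrt (1 - A ^+ 2) * (1 - lambda C g * x)
      / (pi * (1 - x ^+ 2) * Num.sqrt (A ^+ 2 - x ^+ 2))
  else 0.

Definition adequiv (C1 : 'M[R[i]]_2) (g1 : 'cV[R[i]]_2)
                   (C2 : 'M[R[i]]_2) (g2 : 'cV[R[i]]_2) : Prop :=
  density C1 g1 = density C2 g2.

Definition Ctheta (th : R) : 'M[R[i]]_2 :=
  \matrix_(i < 2, j < 2)
    if i == j then Complex (cos th) 0
    else if i == up then Complex (sin th) 0 else Complex (- sin th) 0.

Definition gamma_st (ph xi : R) : 'cV[R[i]]_2 :=
  \col_(i < 2)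
    if i == up then Complex (cos ph) 0
    else Complex (sin ph) 0 * Complex (cos xi) (sin xi).

Definition inS (s : R * R * R) : Prop :=
  let: (ph, xi, th) := s in
  (0 < th < pi / 2) /\
  ((xi = 0 /\ th / 2 <= ph <= pi / 4 + th / 2) \/
   (xi = pi /\ pi / 4 - th / 2 < ph <= (pi - th) / 2)).

End QWalk.

(* The limit density depends on a setup only through A = |a| and lambda, and
   it determines both: A is the edge of its support and, once A is known, the
   value at any interior x <> 0 gives lambda.  For the setup (C_theta,
   gamma_{phi,xi}) one has A = cos theta and lambda A = cos (2 phi - theta)
   for xi = 0, cos (2 phi + theta) for xi = pi.  On S the map
   (phi, xi, theta) |-> (theta, 2 phi -+ theta) is a bijection onto
   (0, pi/2) x [0, pi] (the xi = 0 branch covers [0, pi/2], the xi = pi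
   branch (pi/2, pi]), so S parametrizes exactly the pairs (A, lambda A) in
   (0, 1) x [-1, 1].  A non-trivial coin has 0 < A < 1, and
   |lambda A| <= 1 by Cauchy-Schwarz. *)
From mathcomp Require Import all_boot all_order all_algebra.
From mathcomp Require Import complex spectral.
From mathcomp Require Import reals trigo.
From mathcomp Require Import ring lra.
Import Order.TTheory GRing.Theory Num.Theory.
Local Open Scope ring_scope.
Set Implicit Arguments.
Unset Strict Implicit.

Section CoinSetups.
Variable R : realType.
Implicit Types (C : 'M[R[i]]_2) (g : 'cV[R[i]]_2) (x y th ph xi : R).

Local Notation norma C := (Normc.normc (coin_a C)).

Lemma normc_ge0 (z : R[i]) : 0 <= Normc.normc z.
Proof. by case: z => a b /=; exact: sqrtr_ge0. Qed.

Lemma normc_gt0 (z : R[i]) : z != 0 -> 0 < Normc.normc z.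
Proof.
move=> nz; rewrite lt_neqAle normc_ge0 andbT eq_sym.
by apply: contra nz => /eqP/Normc.eq0_normc ->.
Qed.

Lemma adequiv_of_eq C1 g1 C2 g2 :
  norma C1 = norma C2 -> lambda C1 g1 = lambda C2 g2 -> adequiv C1 g1 C2 g2.
Proof. by move=> eA eL; rewrite /adequiv /density eA eL. Qed.

Lemma density_in C g x : - norma C < x < norma C ->
  density C g x = Num.sqrt (1 - norma C ^+ 2) * (1 - lambda C g * x)
      / (pi * (1 - x ^+ 2) * Num.sqrt (norma C ^+ 2 - x ^+ 2)).
Proof. by move=> hx; rewrite /density hx. Qed.

Lemma density_out C g x : ~~ (- norma C < x < norma C) -> density C g x = 0.
Proof. by move=> hx; rewrite /density (negbTE hx). Qed.

Lemma density_in_eq C g x : 0 < norma C < 1 -> - norma C < x < norma C ->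
  density C g x * (pi * (1 - x ^+ 2) * Num.sqrt (norma C ^+ 2 - x ^+ 2))
    / Num.sqrt (1 - norma C ^+ 2) = 1 - lambda C g * x.
Proof.
move=> /andP[A0 A1] /andP[xl xr]; rewrite density_in ?xl //.
have pi0 := @pi_gt0 R.
rewrite mulfVK; first by rewrite mulrC mulKf // sqrtr_eq0 -ltNge; nra.
rewrite !mulf_neq0 ?gt_eqF //; first by rewrite subr_gt0; nra.
by rewrite sqrtr_gt0 subr_gt0; nra.
Qed.

Lemma norma_le_of_density_eq C g C' g' : 0 < norma C' < 1 ->
  density C g = density C' g' -> norma C' <= norma C.
Proof.
move=> hA' e; rewrite leNgt; apply/negP => lt.
have A0 := normc_ge0 (coin_a C).
pose x := (norma C + norma C') / 2.
have out y : y = x \/ y = - x -> 1 - lambda C' g' * y = 0.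
  move=> ey; rewrite -density_in_eq //; last by case: ey => ->; rewrite /x; lra.
  rewrite -e density_out ?mul0r //.
  by rewrite negb_and -!leNgt; case: ey => ->; rewrite /x; apply/orP; [right|left]; lra.
have := out x (or_introl erefl); have := out (- x) (or_intror erefl); lra.
Qed.

Lemma adequiv_norma_lambda C1 g1 C2 g2 :
  0 < norma C1 < 1 -> 0 < norma C2 < 1 -> adequiv C1 g1 C2 g2 ->
  norma C1 = norma C2 /\ lambda C1 g1 = lambda C2 g2.
Proof.
move=> h1 h2 e.
have eA : norma C1 = norma C2.
  apply/eqP; rewrite eq_le (norma_le_of_density_eq h1 (esym e)).
  exact: (norma_le_of_density_eq h2 e).
split=> //; have /andP[A0 _] := h1.
pose x := norma C1 / 2.
have hx1 : - norma C1 < x < norma C1 by rewrite /x; apply/andP; split; lra.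
have hx2 : - norma C2 < x < norma C2 by move: hx1; rewrite eA.
have := density_in_eq g1 h1 hx1; rewrite e eA density_in_eq // => eL.
by apply: (mulIf (x := x)); [rewrite /x; apply/eqP; lra | lra].
Qed.

Lemma cos_in01 th : 0 < th < pi / 2 -> 0 < cos th < 1.
Proof.
move=> /andP[th0 th1]; have pi0 := @pi_gt0 R.
rewrite cos_gt0_pihalf /=; last by apply/andP; split; lra.
by rewrite -(@cos0 R) ltr_cos ?in_itv //=; apply/andP; split; lra.
Qed.

Lemma norma_Ctheta th : 0 < th < pi / 2 -> norma (Ctheta th) = cos th.
Proof.
move/cos_in01 => /andP[c0 _].
by rewrite /coin_a /Ctheta mxE /= expr0n /= addr0 sqrtr_sqr ger0_norm ?ltW.
Qed.

Lemma norma_Ctheta_in01 th : 0 < th < pi / 2 -> 0 < norma (Ctheta th) < 1.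
Proof. by move=> hth; rewrite norma_Ctheta // cos_in01. Qed.

Lemma cos_inj_0pi x y : 0 <= x <= pi -> 0 <= y <= pi -> cos x = cos y -> x = y.
Proof. by move=> hx hy e; rewrite -(@cosK R x) ?in_itv // -(@cosK R y) ?in_itv // e. Qed.

Lemma cos_inj_pihalf x y : 0 < x < pi / 2 -> 0 < y < pi / 2 -> cos x = cos y -> x = y.
Proof.
have pi0 := @pi_gt0 R.
by move=> /andP[x0 x1] /andP[y0 y1]; apply: cos_inj_0pi; apply/andP; split; lra.
Qed.

Lemma inS_theta ph xi th : inS (ph, xi, th) -> 0 < th < pi / 2.
Proof. by case. Qed.

Lemma lambda_Ctheta_gamma th ph xi : cos th != 0 ->
  lambda (Ctheta th) (gamma_st ph xi) =
  cos ph ^+ 2 - sin ph ^+ 2 + 2 * sin th * cos ph * sin ph * cos xi / cos th.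
Proof.
move=> c0.
rewrite /lambda /coin_a /coin_b /alpha /beta /Ctheta /gamma_st !mxE /=.
rewrite !sqr_sqrtr ?addr_ge0 ?sqr_ge0 // expr0n /=.
rewrite !(mul0r, mulr0, subr0, addr0, oppr0, add0r).
have -> : (sin ph * cos xi) ^+ 2 + (sin ph * sin xi) ^+ 2 = sin ph ^+ 2.
  by rewrite !exprMn -mulrDr cos2Dsin2 mulr1.
by field.
Qed.

Lemma lambda_Ctheta_gamma0 th ph : cos th != 0 ->
  lambda (Ctheta th) (gamma_st ph 0) * cos th = cos (ph + ph - th).
Proof. by move=> c0; rewrite lambda_Ctheta_gamma // cos0 cosB cosD sinD; field. Qed.

Lemma lambda_Ctheta_gammapi th ph : cos th != 0 ->
  lambda (Ctheta th) (gamma_st ph pi) * cos th = cos (ph + ph + th).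
Proof. by move=> c0; rewrite lambda_Ctheta_gamma // cospi !cosD sinD; field. Qed.

Lemma coin_row_normc C : is_coin C ->
  norma C ^+ 2 + Normc.normc (coin_b C) ^+ 2 = 1.
Proof.
move/unitarymxP/(congr1 (fun M : 'M[R[i]]_2 => M up up)).
rewrite !mxE big_ord_recr big_ord_recr big_ord0 /= !mxE add0r.
have -> : widen_ord (m:=2) (leqnSn 1) ord_max = up by apply: val_inj.
rewrite /coin_a /coin_b; case: (C up up) => a1 a2; case: (C up ord_max) => b1 b2.
move=> /(congr1 (@complex.Re R)) /=.
by rewrite !sqr_sqrtr ?addr_ge0 ?sqr_ge0 // => <-; ring.
Qed.

Lemma nontrivial_norma C : is_coin C -> nontrivial_coin C -> 0 < norma C < 1.
Proof.
rewrite /nontrivial_coin !mulf_eq0 !negb_or => /coin_row_normc eAB.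
case/andP=> /andP[/andP[a0 b0] _] _.
have A0 := normc_gt0 a0; have B0 := normc_gt0 b0.
by rewrite A0 /=; nra.
Qed.

Lemma normr_Re_cross_le (p q : R[i]) :
  `|complex.Re (p * Num.conj q + Num.conj p * q)| <= 2 * Normc.normc p * Normc.normc q.
Proof.
case: p => p1 p2; case: q => q1 q2 /=.
rewrite -mulrA -sqrtrM ?addr_ge0 ?sqr_ge0 //.
have -> : p1 * q1 - p2 * - q2 + (p1 * q1 - - p2 * q2) = 2 * (p1 * q1 + p2 * q2) by ring.
rewrite normrM ger0_norm // ler_pM2l // -sqrtr_sqr.
by apply: ler_wsqrtr; have := sqr_ge0 (p1 * q2 - p2 * q1); nra.
Qed.

Lemma sqr_dot2_le (x y a b : R) : (x * a + y * b) ^+ 2 <= (x ^+ 2 + y ^+ 2) * (a ^+ 2 + b ^+ 2).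
Proof. by have := sqr_ge0 (x * b - y * a); nra. Qed.

Lemma lambda_norma_bound C g : is_coin C -> unit_state g -> 0 < norma C ->
  -1 <= lambda C g * norma C <= 1.
Proof.
rewrite /unit_state => /coin_row_normc eAB euv A0.
have hT := normr_Re_cross_le (coin_a C * alpha g) (coin_b C * beta g).
rewrite !Normc.normcM in hT.
have B0 := normc_ge0 (coin_b C).
have u0 := normc_ge0 (alpha g); have v0 := normc_ge0 (beta g).
move: hT eAB euv A0 B0 u0 v0; rewrite /lambda.
set A := norma C; set B := Normc.normc (coin_b C); set u := Normc.normc (alpha g).
set v := Normc.normc (beta g); set T := complex.Re _.
move=> hT eAB euv A0 B0 u0 v0.
have -> : (u ^+ 2 - v ^+ 2 + T / A ^+ 2) * A = (u ^+ 2 - v ^+ 2) * A + T / A.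
  by field; rewrite lt0r_neq0.
have hTA : `|T / A| <= 2 * u * v * B.
  rewrite normrM normfV (ger0_norm (ltW A0)) ler_pdivrMr //.
  by have -> : 2 * u * v * B * A = 2 * (A * u) * (B * v) by ring.
have CS : (`|u ^+ 2 - v ^+ 2| * A + 2 * u * v * B) ^+ 2 <= 1.
  have e2 : (u ^+ 2 - v ^+ 2) ^+ 2 + (2 * u * v) ^+ 2 = (u ^+ 2 + v ^+ 2) ^+ 2.
    by ring.
  rewrite euv expr1n in e2.
  have := sqr_dot2_le `|u ^+ 2 - v ^+ 2| (2 * u * v) A B.
  by rewrite real_normK ?num_real // e2 eAB mulr1.
have := ler_normD ((u ^+ 2 - v ^+ 2) * A) (T / A).
rewrite normrM (ger0_norm (ltW A0)) -ler_norml.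
have := sqr_ge0 (u * v * B); nra.
Qed.

Lemma inS_representative A L : 0 < A < 1 -> -1 <= L * A <= 1 ->
  exists ph xi th, inS (ph, xi, th) /\ cos th = A /\
    lambda (Ctheta th) (gamma_st ph xi) = L.
Proof.
move=> /andP[A0 A1] hLA; have pi0 := @pi_gt0 R.
have [/andP[th0 thpi] cth] := @acos_def R A ltac:(apply/andP; split; lra).
have [/andP[ps0 pspi] cps] := acos_def hLA.
set th := acos A in th0 thpi cth; set ps := acos (L * A) in ps0 pspi cps.
have th_gt0 : 0 < th.
  by rewrite lt_neqAle th0 andbT; apply/eqP => th00; move: cth; rewrite -th00 cos0; lra.
have th_lt : th < pi / 2.
  rewrite -(@ltr_cos R) ?in_itv /=; try (apply/andP; split; lra).
  by case: (@pihalf_02_cos_pihalf R) => _ ->; rewrite cth.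
have cth0 : cos th != 0 by rewrite cth gt_eqF.
have lamE ph xi : lambda (Ctheta th) (gamma_st ph xi) * cos th = cos ps ->
    lambda (Ctheta th) (gamma_st ph xi) = L.
  by rewrite cth cps => /(mulIf (lt0r_neq0 A0)).
case: (lerP ps (pi / 2)) => hps.
- exists ((ps + th) / 2), 0, th; split; last split=> //.
    by split; [apply/andP; split | left; split => //; apply/andP; split]; lra.
  by apply: lamE; rewrite lambda_Ctheta_gamma0 //; congr cos; field.
- exists ((ps - th) / 2), pi, th; split; last split=> //.
    by split; [apply/andP; split | right; split => //; apply/andP; split]; lra.
  by apply: lamE; rewrite lambda_Ctheta_gammapi //; congr cos; field.
Qed.

Lemma inS_lambda_inj ph xi ph' xi' th :
  inS (ph, xi, th) -> inS (ph', xi', th) ->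
  lambda (Ctheta th) (gamma_st ph xi) = lambda (Ctheta th) (gamma_st ph' xi') ->
  (ph, xi) = (ph', xi').
Proof.
move=> [hth hS] [_ hS'] eL.
have /andP[c0 _] := cos_in01 hth; have /andP[t1 t2] := hth.
have /(congr1 (fun t => t * cos th)) := eL; rewrite /= {eL}.
case: hS => [[-> /andP[p1 p2]]|[-> /andP[p1 p2]]];
  case: hS' => [[-> /andP[q1 q2]]|[-> /andP[q1 q2]]];
  rewrite ?lambda_Ctheta_gamma0 ?lambda_Ctheta_gammapi ?gt_eqF //;
  move/cos_inj_0pi => e; have {e} := e ltac:(apply/andP; split; lra) ltac:(apply/andP; split; lra);
  by [move=> e; congr pair; lra | lra].
Qed.
End CoinSetups.

Theorem theorem4 (R : realType) :
  (forall (C : 'M[R[i]]_2) (g : 'cV[R[i]]_2),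
      is_coin C -> unit_state g -> nontrivial_coin C ->
      exists ph xi th : R,
        inS (ph, xi, th) /\ adequiv C g (Ctheta th) (gamma_st ph xi)) /\
  (forall ph xi th ph' xi' th' : R,
      inS (ph, xi, th) -> inS (ph', xi', th') ->
      adequiv (Ctheta th) (gamma_st ph xi) (Ctheta th') (gamma_st ph' xi') ->
      (ph, xi, th) = (ph', xi', th')).
Proof.
split.
  move=> C g hC hg hnt; have hA := nontrivial_norma hC hnt.
  have /andP[A0 _] := hA.
  have [ph [xi [th [hs [cth eL]]]]] := inS_representative hA (lambda_norma_bound hC hg A0).
  exists ph, xi, th; split=> //.
  by apply: (adequiv_of_eq _ (esym eL)); rewrite norma_Ctheta ?cth // (inS_theta hs).
move=> ph xi th ph' xi' th' hs hs' e.
have [hth hth'] := (inS_theta hs, inS_theta hs').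
have [eA eL] := adequiv_norma_lambda (norma_Ctheta_in01 hth) (norma_Ctheta_in01 hth') e.
rewrite !norma_Ctheta // in eA.
have eth := cos_inj_pihalf hth hth' eA; subst th'.
by have [-> ->] := inS_lambda_inj hs hs' eL.
Qed.
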